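(* For any integers $M,s>0$ there exists $\varepsilon_1(M,s)>0$ such that for every $\varepsilon<\varepsilon_1(M,s)$ and every $L\le M$, there exist linear combinations of the first $L$ eigenfunctions of the Laplacian on $G(s,\varepsilon)$ having exactly $L-1+(L-1)(s-1)$ zeroes on the small edges.
   Context: $G(s,\varepsilon)$ is the star graph with one central vertex, one edge of length $1$ and $s$ edges (''small edges'') of length $\varepsilon$, each joining the central vertex to a degree-one vertex. The Laplacian $-\frac{d^2}{dx^2}$ acts edgewise with Dirichlet conditions at the degree-one vertices and Neumann–Kirchhoff conditions at the central vertex (continuity and vanishing sum of outgoing derivatives); eigenvalues are ordered increasingly with multiplicity and $f_1,f_2,\dots$ are corresponding $L^2$-orthogonal eigenfunctions. Zeroes at the degree-one vertices are not counted. *)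

From Stdlib Require Import Reals Lra Lia List.
From Coquelicot Require Import Coquelicot.
Open Scope R_scope.

(* Every edge is parametrised by
   its distance x from the central vertex:
   - the long edge is [0,1], x = 0 the centre, x = 1 the degree-one vertex;
   - small edge j (j < s) is [0,eps], x = 0 the centre, x = eps the leaf. *)
Record gfun := mkGfun { ge : R -> R ; se : nat -> R -> R }.

Fixpoint sumR (n : nat) (f : nat -> R) : R :=
  match n with O => 0 | S m => sumR m f + f m end.

Definition edge_eq (l lam : R) (u : R -> R) : Prop :=
  exists u1 : R -> R, forall x, 0 <= x <= l ->
    is_derive u x (u1 x) /\ is_derive u1 x (- lam * u x).

Definition gnonzero (s : nat) (eps : R) (g : gfun) : Prop :=
  (exists x, 0 <= x <= 1 /\ ge g x <> 0) \/
  (exists j x, (j < s)%nat /\ 0 <= x <= eps /\ se g j x <> 0).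

(* g is an eigenfunction with eigenvalue lam of the Laplacian on G(s,eps):
   Dirichlet at degree-one vertices, Neumann–Kirchhoff at the centre
   (continuity + vanishing sum of outgoing derivatives). *)
Definition is_eigen (s : nat) (eps lam : R) (g : gfun) : Prop :=
  edge_eq 1 lam (ge g) /\ ge g 1 = 0 /\
  (forall j, (j < s)%nat ->
     edge_eq eps lam (se g j) /\ se g j eps = 0 /\ se g j 0 = ge g 0) /\
  Derive (ge g) 0 + sumR s (fun j => Derive (se g j) 0) = 0 /\
  gnonzero s eps g.

Definition ginner (s : nat) (eps : R) (f g : gfun) : R :=
  RInt (fun x => ge f x * ge g x) 0 1 +
  sumR s (fun j => RInt (fun x => se f j x * se g j x) 0 eps).

Definition geq (s : nat) (eps : R) (f g : gfun) : Prop :=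
  (forall x, 0 <= x <= 1 -> ge f x = ge g x) /\
  (forall j x, (j < s)%nat -> 0 <= x <= eps -> se f j x = se g j x).

Definition lincomb (a : nat -> R) (n : nat) (f : nat -> gfun) : gfun :=
  mkGfun (fun x => sumR n (fun k => a k * ge (f k) x))
         (fun j x => sumR n (fun k => a k * se (f k) j x)).

(* (lam k, f k), k = 0,1,2,... (f 0 is "f_1") is the full sequence of
   eigenvalues, in nondecreasing order and repeated with multiplicity,
   with pairwise L^2-orthogonal eigenfunctions: every eigenfunction with
   eigenvalue mu is a finite combination of the f k with lam k = mu. *)
Definition spectral_seq (s : nat) (eps : R) (lam : nat -> R) (f : nat -> gfun)
  : Prop :=
  (forall k, is_eigen s eps (lam k) (f k)) /\
  (forall k, lam k <= lam (S k)) /\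
  (forall k m, k <> m -> ginner s eps (f k) (f m) = 0) /\
  (forall mu g, is_eigen s eps mu g ->
     exists (n : nat) (a : nat -> R),
       (forall k, (k < n)%nat -> a k <> 0 -> lam k = mu) /\
       geq s eps g (lincomb a n f)).

(* g has exactly N zeroes on the small edges: zeroes at the leaves are not
   counted; interior zeroes of each small edge are counted, and the central
   vertex (a single point of the metric graph) counts once if g vanishes
   there.  In particular the zero set must be finite. *)
Definition small_zero_count (s : nat) (eps : R) (g : gfun) (N : nat) : Prop :=
  exists lst : list (nat * R),
    NoDup lst /\
    (forall p, In p lst <->
       ((fst p < s)%nat /\ 0 < snd p < eps /\ se g (fst p) (snd p) = 0)) /\
    ((ge g 0 <> 0 /\ length lst = N) \/ (ge g 0 = 0 /\ S (length lst) = N)).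

From Stdlib Require Import Reals Lra Lia List FinFun Classical_Prop.
From Coquelicot Require Import Coquelicot.
Open Scope R_scope.

(* An eigenfunction with eigenvalue k^2 is, on each edge, a multiple of sin (k (l - x)).
   When k eps < PI continuity at the centre makes the multiple the same on all small edges
   and nonzero, so these eigenvalues are simple and their eigenfunctions are fixed by the
   central value. The secular equation sin (k eps) cos k + s sin k cos (k eps) = 0 has a root
   in (n PI - PI/2, n PI) for each n, hence for eps < 1/(2M+2) the first M eigenvalues have
   distinct frequencies k_i with k_i eps < PI/2. A combination of the first L eigenfunctions
   is then h (eps - x) on every small edge, with h y = sum_{i<L} c_i sin (k_i y) arbitrary.
   Linear algebra imposes L-1 chosen zeros on h in (0, eps), and a Rolle argument (divide by
   sin (k_{L-1} y), differentiate twice, induct on L) shows a nontrivial such h has at most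
   L-1 zeros in (0, eps]. So h vanishes exactly at the chosen points and not at eps: each of
   the s small edges carries L-1 zeros and the centre none. *)

Lemma sumR_ext n f g : (forall i, (i < n)%nat -> f i = g i) -> sumR n f = sumR n g.
Proof.
  induction n as [|n IH]; simpl; intros H; [reflexivity|].
  rewrite IH by (intros; apply H; lia). rewrite H by lia. reflexivity.
Qed.

Lemma sumR_S n f : sumR (S n) f = sumR n f + f n.
Proof. reflexivity. Qed.

Lemma sumR_plus n f g : sumR n (fun i => f i + g i) = sumR n f + sumR n g.
Proof. induction n as [|n IH]; simpl; [ring | rewrite IH; ring]. Qed.

Lemma sumR_scal n c f : sumR n (fun i => c * f i) = c * sumR n f.
Proof. induction n as [|n IH]; simpl; [ring | rewrite IH; ring]. Qed.

Lemma sumR_const n c : sumR n (fun _ => c) = INR n * c.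
Proof. induction n as [|n IH]; simpl sumR; [simpl; ring | rewrite IH, S_INR; ring]. Qed.

Lemma sumR_eq0 n f : (forall i, (i < n)%nat -> f i = 0) -> sumR n f = 0.
Proof. intros H. rewrite (sumR_ext n f (fun _ => 0)), sumR_const by auto. ring. Qed.

Lemma sumR_neq0 n f : sumR n f <> 0 -> exists i, (i < n)%nat /\ f i <> 0.
Proof.
  induction n as [|n IH]; simpl; intros H; [lra|].
  destruct (Req_dec (f n) 0) as [E|E].
  - destruct IH as [i [Hi Hfi]]; [lra|]. exists i; split; [lia | exact Hfi].
  - exists n; split; [lia | exact E].
Qed.

Lemma finite_choice {A : Type} (a0 : A) (P : nat -> A -> Prop) n :
  (forall i, (i < n)%nat -> exists x, P i x) ->
  exists f : nat -> A, forall i, (i < n)%nat -> P i (f i).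
Proof.
  induction n as [|n IH]; intros H.
  - exists (fun _ => a0). intros; lia.
  - destruct IH as [f Hf]; [intros; apply H; lia|].
    destruct (H n ltac:(lia)) as [x Hx].
    exists (fun i => if Nat.eq_dec i n then x else f i).
    intros i Hi. destruct (Nat.eq_dec i n) as [->|]; [exact Hx | apply Hf; lia].
Qed.

Lemma is_derive_eq (f : R -> R) (x l l' : R) : is_derive f x l -> l = l' -> is_derive f x l'.
Proof. intros H <-; exact H. Qed.

Lemma is_derive_Rplus (f g : R -> R) x df dg :
  is_derive f x df -> is_derive g x dg -> is_derive (fun y => f y + g y) x (df + dg).
Proof. intros Hf Hg. apply (is_derive_plus f g x df dg Hf Hg). Qed.

Lemma is_derive_Rminus (f g : R -> R) x df dg :
  is_derive f x df -> is_derive g x dg -> is_derive (fun y => f y - g y) x (df - dg).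
Proof. intros Hf Hg. apply (is_derive_minus f g x df dg Hf Hg). Qed.

Lemma is_derive_Rmult (f g : R -> R) x df dg :
  is_derive f x df -> is_derive g x dg ->
  is_derive (fun y => f y * g y) x (df * g x + f x * dg).
Proof. intros Hf Hg. apply (is_derive_mult f g x df dg Hf Hg), Rmult_comm. Qed.

Lemma is_derive_sumR n (f : nat -> R -> R) (df : nat -> R) x :
  (forall i, (i < n)%nat -> is_derive (f i) x (df i)) ->
  is_derive (fun y => sumR n (fun i => f i y)) x (sumR n df).
Proof.
  induction n as [|n IH]; simpl; intros H.
  - apply (is_derive_const (K := R_AbsRing) 0).
  - apply is_derive_Rplus; [apply IH; intros; apply H; lia | apply H; lia].
Qed.

Lemma is_derive_continuity_pt (f : R -> R) x l : is_derive f x l -> continuity_pt f x.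
Proof.
  intros H. apply continuity_pt_filterlim, (ex_derive_continuous (V := R_NormedModule)).
  exists l; exact H.
Qed.

Lemma rolle_is_derive (f df : R -> R) a b :
  a < b -> (forall x, a <= x <= b -> is_derive f x (df x)) -> f a = f b ->
  exists c, a < c < b /\ df c = 0.
Proof.
  intros Hab Hd Heq.
  assert (pr : forall x, a < x < b -> derivable_pt f x).
  { intros x Hx. exists (df x). apply is_derive_Reals, Hd. lra. }
  destruct (Rolle f a b pr) as [c [Hc Hc0]]; auto.
  - intros x Hx. eapply is_derive_continuity_pt, Hd, Hx.
  - exists c. split; [exact Hc|]. rewrite <- Hc0. symmetry.
    apply derive_pt_eq_0, is_derive_Reals, Hd. lra.
Qed.

(** * The edge equation *)

Definition solves_on (l lam : R) (u u1 : R -> R) : Prop :=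
  forall x, 0 <= x <= l -> is_derive u x (u1 x) /\ is_derive u1 x (- lam * u x).

Lemma mul_le_abs_sqr_add t a b : 0 <= 2 * t * a * b + Rabs t * (a * a + b * b).
Proof.
  destruct (Rle_dec 0 t).
  - rewrite Rabs_pos_eq by lra.
    replace (_ + _) with (t * ((a + b) * (a + b))) by ring.
    apply Rmult_le_pos; [lra | apply Rle_0_sqr].
  - rewrite Rabs_left by lra.
    replace (_ + _) with (- t * ((a - b) * (a - b))) by ring.
    apply Rmult_le_pos; [lra | apply Rle_0_sqr].
Qed.

(* The energy (u^2 + u1^2) e^{|1 - lam| x} is nondecreasing and vanishes at l. *)
Lemma solves_on_zero_end l lam u u1 :
  0 <= l -> solves_on l lam u u1 -> u l = 0 -> u1 l = 0 ->
  forall x, 0 <= x <= l -> u x = 0 /\ u1 x = 0.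
Proof.
  intros Hl Hd Hul Hu1l x Hx.
  set (c := Rabs (1 - lam)).
  set (E := fun y => (u y * u y + u1 y * u1 y) * exp (c * y)).
  set (dE := fun y => (2 * (1 - lam) * u y * u1 y + c * (u y * u y + u1 y * u1 y))
                      * exp (c * y)).
  assert (HE : forall y, 0 <= y <= l -> is_derive E y (dE y)).
  { intros y Hy. destruct (Hd y Hy) as [D1 D2]. unfold E, dE.
    eapply is_derive_eq.
    - apply (is_derive_Rmult (fun y => u y * u y + u1 y * u1 y) (fun y => exp (c * y))).
      + apply is_derive_Rplus; apply is_derive_Rmult; eauto.
      + auto_derive; [exact I | reflexivity].
    - ring. }
  assert (HdE : forall y, 0 <= dE y).
  { intros y. apply Rmult_le_pos; [apply mul_le_abs_sqr_add | apply Rlt_le, exp_pos]. }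
  assert (HEl : E l = 0) by (unfold E; rewrite Hul, Hu1l; ring).
  assert (HEx : E x <= 0).
  { destruct (Req_dec x l) as [->|Hne]; [lra|].
    destruct (MVT_gen E x l dE) as [xi [Hxi Heq]].
    - intros y Hy. rewrite Rmin_left, Rmax_right in Hy by lra. apply HE; lra.
    - intros y Hy. rewrite Rmin_left, Rmax_right in Hy by lra.
      eapply is_derive_continuity_pt, HE; lra.
    - pose proof (HdE xi). nra. }
  unfold E in HEx. pose proof (exp_pos (c * x)).
  assert (u x * u x + u1 x * u1 x <= 0) by nra.
  split; nra.
Qed.

Definition dirichlet_solution (lam l : R) (v v1 : R -> R) : Prop :=
  (forall x, is_derive v x (v1 x) /\ is_derive v1 x (- lam * v x)) /\ v l = 0 /\ v1 l <> 0.

Lemma edge_eq_dirichlet_multiple l lam u v v1 :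
  0 <= l -> edge_eq l lam u -> u l = 0 -> dirichlet_solution lam l v v1 ->
  exists c, (forall x, 0 <= x <= l -> u x = c * v x) /\ Derive u 0 = c * v1 0.
Proof.
  intros Hl [u1 Hu] Hul [Hv [Hvl Hv1]].
  set (c := u1 l / v1 l).
  assert (Hdiff : forall x, 0 <= x <= l -> u x - c * v x = 0 /\ u1 x - c * v1 x = 0).
  { apply (solves_on_zero_end l lam _ _ Hl).
    - intros y Hy. destruct (Hu y Hy) as [U1 U2]. destruct (Hv y) as [V1 V2]. split.
      + apply is_derive_Rminus; [exact U1 | apply is_derive_scal, V1].
      + replace (- lam * (u y - c * v y)) with (- lam * u y - c * (- lam * v y)) by ring.
        apply is_derive_Rminus; [exact U2 | apply is_derive_scal, V2].
    - rewrite Hul, Hvl. ring.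
    - unfold c. field. exact Hv1. }
  exists c. split.
  - intros x Hx. destruct (Hdiff x Hx). lra.
  - destruct (Hu 0 ltac:(lra)) as [D _]. rewrite (is_derive_unique _ _ _ D).
    destruct (Hdiff 0 ltac:(lra)). lra.
Qed.

(** * Eigenfunctions of G(s, eps) *)

Lemma is_eigen_dirichlet_multiple s eps lam g V V1 W W1 :
  0 < eps -> is_eigen s eps lam g ->
  dirichlet_solution lam 1 V V1 -> dirichlet_solution lam eps W W1 ->
  exists d (c : nat -> R),
    (forall x, 0 <= x <= 1 -> ge g x = d * V x) /\ Derive (ge g) 0 = d * V1 0 /\
    (forall j, (j < s)%nat ->
       (forall x, 0 <= x <= eps -> se g j x = c j * W x) /\ Derive (se g j) 0 = c j * W1 0).
Proof.
  intros He [Hlong [Hlong1 [Hsmall _]]] HV HW.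
  destruct (edge_eq_dirichlet_multiple 1 lam (ge g) V V1) as [d Hd]; auto; [lra|].
  destruct (finite_choice 0 (fun j c => (forall x, 0 <= x <= eps -> se g j x = c * W x) /\
                                       Derive (se g j) 0 = c * W1 0) s) as [c Hc].
  { intros j Hj. destruct (Hsmall j Hj) as [Hj1 [Hj2 _]].
    apply (edge_eq_dirichlet_multiple eps lam); auto; lra. }
  exists d, c. tauto.
Qed.

(* Continuity at the centre gives every edge the sign of g(0); Kirchhoff then forces g(0) = 0. *)
Lemma no_eigen_of_decreasing_at_centre s eps lam g V V1 W W1 :
  0 < eps -> dirichlet_solution lam 1 V V1 -> dirichlet_solution lam eps W W1 ->
  0 < V 0 -> V1 0 < 0 -> 0 < W 0 -> W1 0 < 0 -> ~ is_eigen s eps lam g.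
Proof.
  intros He HV HW HV0 HV10 HW0 HW10 Hg.
  destruct (is_eigen_dirichlet_multiple s eps lam g V V1 W W1 He Hg HV HW)
    as [d [c [Hd [Hd' Hc]]]].
  destruct Hg as [_ [_ [Hsmall [Kirchhoff Hnz]]]].
  set (g0 := ge g 0).
  assert (Ed : d = g0 / V 0) by (unfold g0; rewrite Hd by lra; field; lra).
  assert (Ec : forall j, (j < s)%nat -> c j = g0 / W 0).
  { intros j Hj. destruct (Hsmall j Hj) as [_ [_ Hcont]]. destruct (Hc j Hj) as [Hcj _].
    rewrite Hcj in Hcont by lra. unfold g0. rewrite <- Hcont. field. lra. }
  rewrite Hd', (sumR_ext s _ (fun _ => g0 / W 0 * W1 0)), sumR_const, Ed in Kirchhoff.
  2:{ intros j Hj. destruct (Hc j Hj) as [_ ->]. rewrite Ec; auto. }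
  assert (Hg0 : g0 = 0).
  { assert (Hneg : V1 0 / V 0 + INR s * (W1 0 / W 0) < 0).
    { assert (V1 0 / V 0 < 0) by (apply Rdiv_neg_pos; auto).
      assert (W1 0 / W 0 < 0) by (apply Rdiv_neg_pos; auto).
      pose proof (pos_INR s). nra. }
    assert (g0 * (V1 0 / V 0 + INR s * (W1 0 / W 0))
            = g0 / V 0 * V1 0 + INR s * (g0 / W 0 * W1 0)) by (field; lra).
    nra. }
  destruct Hnz as [[x [Hx Hne]] | [j [x [Hj [Hx Hne]]]]]; apply Hne.
  - rewrite Hd, Ed, Hg0 by exact Hx. field. lra.
  - destruct (Hc j Hj) as [Hcj _]. rewrite Hcj, Ec, Hg0 by auto. field. lra.
Qed.

Lemma dirichlet_solution_sin k l :
  0 < k -> dirichlet_solution (k * k) l (fun x => sin (k * (l - x)))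
                                       (fun x => - k * cos (k * (l - x))).
Proof.
  intros Hk. split; [|split].
  - intros x; split; auto_derive; auto; unfold Rminus; ring.
  - rewrite Rminus_diag, Rmult_0_r. apply sin_0.
  - rewrite Rminus_diag, Rmult_0_r, cos_0. lra.
Qed.

Lemma dirichlet_solution_sinh k l :
  0 < k -> dirichlet_solution (- (k * k)) l
    (fun x => exp (k * (l - x)) - exp (- (k * (l - x))))
    (fun x => - k * (exp (k * (l - x)) + exp (- (k * (l - x))))).
Proof.
  intros Hk. split; [|split].
  - intros x; split; auto_derive; auto; unfold Rminus; ring.
  - rewrite Rminus_diag, Rmult_0_r, Ropp_0. ring.
  - rewrite Rminus_diag, Rmult_0_r, Ropp_0, exp_0. lra.
Qed.

Lemma dirichlet_solution_affine l : dirichlet_solution 0 l (fun x => l - x) (fun _ => -1).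
Proof.
  split; [|split].
  - intros x; split; auto_derive; auto; unfold Rminus; ring.
  - ring.
  - lra.
Qed.

Lemma is_eigen_pos s eps lam g : 0 < eps -> is_eigen s eps lam g -> 0 < lam.
Proof.
  intros He Hg. destruct (Rlt_le_dec 0 lam) as [|Hle]; [assumption|exfalso].
  destruct (Rle_lt_or_eq_dec _ _ Hle) as [Hlt | ->].
  - set (k := sqrt (- lam)).
    assert (Hk : 0 < k) by (apply sqrt_lt_R0; lra).
    assert (Hlam : lam = - (k * k)) by (unfold k; rewrite sqrt_sqrt; lra).
    assert (Hsinh : forall l, 0 < l ->
              0 < exp (k * (l - 0)) - exp (- (k * (l - 0))) /\
              - k * (exp (k * (l - 0)) + exp (- (k * (l - 0)))) < 0).
    { intros l Hl. split.
      - assert (exp (- (k * (l - 0))) < exp (k * (l - 0))) by (apply exp_increasing; nra).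
        lra.
      - pose proof (exp_pos (k * (l - 0))). pose proof (exp_pos (- (k * (l - 0)))). nra. }
    rewrite Hlam in Hg.
    destruct (Hsinh 1 ltac:(lra)), (Hsinh eps He).
    refine (no_eigen_of_decreasing_at_centre s eps _ g _ _ _ _ He
              (dirichlet_solution_sinh k 1 Hk) (dirichlet_solution_sinh k eps Hk)
              _ _ _ _ Hg); tauto.
  - refine (no_eigen_of_decreasing_at_centre s eps 0 g _ _ _ _ He
              (dirichlet_solution_affine 1) (dirichlet_solution_affine eps)
              _ _ _ _ Hg); lra.
Qed.

Lemma is_eigen_low_form s eps k g :
  0 < eps -> 0 < k -> k * eps < PI -> is_eigen s eps (k * k) g ->
  exists d, (forall x, 0 <= x <= 1 -> ge g x = d * sin (k * (1 - x))) /\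
    d * sin k = ge g 0 /\
    d * cos k * sin (k * eps) = - INR s * ge g 0 * cos (k * eps) /\
    (forall j x, (j < s)%nat -> 0 <= x <= eps ->
       se g j x = ge g 0 / sin (k * eps) * sin (k * (eps - x))).
Proof.
  intros He Hk Hke Hg.
  assert (Hs : 0 < sin (k * eps)) by (apply sin_gt_0; nra).
  destruct (is_eigen_dirichlet_multiple s eps _ g _ _ _ _ He Hg
              (dirichlet_solution_sin k 1 Hk) (dirichlet_solution_sin k eps Hk))
    as [d [c [Hd [Hd' Hc]]]].
  destruct Hg as [_ [_ [Hsmall [Kirchhoff _]]]].
  rewrite Rminus_0_r, Rmult_1_r in Hd'.
  set (g0 := ge g 0).
  assert (Ed : d * sin k = g0).
  { unfold g0. rewrite Hd by lra. rewrite Rminus_0_r, Rmult_1_r. reflexivity. }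
  assert (Ec : forall j, (j < s)%nat -> c j = g0 / sin (k * eps)).
  { intros j Hj. destruct (Hsmall j Hj) as [_ [_ Hcont]]. destruct (Hc j Hj) as [Hcj _].
    rewrite Hcj, Rminus_0_r in Hcont by lra. unfold g0. rewrite <- Hcont. field. lra. }
  rewrite Hd', (sumR_ext s _ (fun _ => g0 / sin (k * eps) * (- k * cos (k * eps)))),
    sumR_const in Kirchhoff.
  2:{ intros j Hj. destruct (Hc j Hj) as [_ ->]. rewrite Ec, Rminus_0_r; auto. }
  exists d. split; [|split; [|split]]; auto.
  - assert (d * cos k * sin (k * eps) + INR s * g0 * cos (k * eps) =
            - sin (k * eps) / k *
              (d * (- k * cos k) + INR s * (g0 / sin (k * eps) * (- k * cos (k * eps)))))
      as E by (field; lra).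
    rewrite Kirchhoff, Rmult_0_r in E. lra.
  - intros j x Hj Hx. destruct (Hc j Hj) as [Hcj _]. rewrite Hcj, Ec by auto. reflexivity.
Qed.

Lemma is_eigen_low_centre_neq0 s eps k g :
  0 < eps -> 0 < k -> k * eps < PI -> is_eigen s eps (k * k) g -> ge g 0 <> 0.
Proof.
  intros He Hk Hke Hg Hg0.
  destruct (is_eigen_low_form s eps k g He Hk Hke Hg) as [d [Hd [Hsin [Hcos Hsmall]]]].
  assert (Hs : 0 < sin (k * eps)) by (apply sin_gt_0; nra).
  rewrite Hg0 in Hsin, Hcos.
  assert (Hdcos : d * cos k = 0).
  { assert (d * cos k * sin (k * eps) = 0) by lra. nra. }
  assert (Hd0 : d = 0).
  { pose proof (sin2_cos2 k) as Hpyth. unfold Rsqr in Hpyth. nra. }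
  destruct Hg as [_ [_ [_ [_ [[x [Hx Hne]] | [j [x [Hj [Hx Hne]]]]]]]]]; apply Hne.
  - rewrite Hd, Hd0 by exact Hx. ring.
  - rewrite Hsmall, Hg0 by auto. unfold Rdiv. ring.
Qed.

(* Both eigenfunctions are fixed by their central values, via the sin k and cos k relations. *)
Lemma is_eigen_low_proportional s eps k g h :
  0 < eps -> 0 < k -> k * eps < PI ->
  is_eigen s eps (k * k) g -> is_eigen s eps (k * k) h ->
  exists r, r <> 0 /\ (forall x, 0 <= x <= 1 -> ge h x = r * ge g x) /\
    (forall j x, (j < s)%nat -> 0 <= x <= eps -> se h j x = r * se g j x).
Proof.
  intros He Hk Hke Hg Hh.
  assert (Hs : 0 < sin (k * eps)) by (apply sin_gt_0; nra).
  pose proof (is_eigen_low_centre_neq0 s eps k g He Hk Hke Hg) as Hg0.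
  pose proof (is_eigen_low_centre_neq0 s eps k h He Hk Hke Hh) as Hh0.
  destruct (is_eigen_low_form s eps k g He Hk Hke Hg) as [dg [Gd [Gsin [Gcos Gsmall]]]].
  destruct (is_eigen_low_form s eps k h He Hk Hke Hh) as [dh [Hd [Hsin [Hcos Hsmall]]]].
  set (g0 := ge g 0) in *. set (h0 := ge h 0) in *.
  assert (Hcross : dh * g0 - dg * h0 = 0).
  { assert (Csin : (dh * g0 - dg * h0) * sin k = 0)
      by (rewrite <- Gsin, <- Hsin; ring).
    assert (Ccos : (dh * g0 - dg * h0) * cos k = 0).
    { assert ((dh * g0 - dg * h0) * cos k * sin (k * eps) = 0).
      { replace ((dh * g0 - dg * h0) * cos k * sin (k * eps)) with
          (g0 * (dh * cos k * sin (k * eps)) - h0 * (dg * cos k * sin (k * eps))) by ring.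
        rewrite Gcos, Hcos. ring. }
      nra. }
    pose proof (sin2_cos2 k) as Hpyth. unfold Rsqr in Hpyth. nra. }
  exists (h0 / g0). split; [|split].
  - unfold Rdiv. apply Rmult_integral_contrapositive.
    split; [exact Hh0 | apply Rinv_neq_0_compat, Hg0].
  - intros x Hx. rewrite Gd, Hd by exact Hx.
    replace dh with (dg * h0 / g0) by (field_simplify_eq; [lra | exact Hg0]).
    field. exact Hg0.
  - intros j x Hj Hx. rewrite Gsmall, Hsmall by auto. field. split; [lra | exact Hg0].
Qed.

Lemma edge_eq_continuous l lam u x : edge_eq l lam u -> 0 <= x <= l -> continuous u x.
Proof.
  intros [u1 Hu] Hx. apply (ex_derive_continuous (V := R_NormedModule)).
  exists (u1 x). apply Hu, Hx.
Qed.

Lemma ex_RInt_edge_sqr l lam u :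
  0 <= l -> edge_eq l lam u -> ex_RInt (fun x => u x * u x) 0 l.
Proof.
  intros Hl Hu. apply (ex_RInt_continuous (V := R_CompleteNormedModule)).
  intros x Hx. rewrite Rmin_left, Rmax_right in Hx by lra.
  apply (continuous_mult (K := R_AbsRing)); apply (edge_eq_continuous l lam); assumption.
Qed.

Lemma ginner_proportional s eps lam g h r :
  0 < eps -> is_eigen s eps lam g ->
  (forall x, 0 <= x <= 1 -> ge h x = r * ge g x) ->
  (forall j x, (j < s)%nat -> 0 <= x <= eps -> se h j x = r * se g j x) ->
  ginner s eps g h = r * ginner s eps g g.
Proof.
  intros He [Hlong [_ [Hsmall _]]] Hl Hs.
  assert (Hint : forall l (u v : R -> R), 0 <= l -> edge_eq l lam u ->
            (forall x, 0 <= x <= l -> v x = r * u x) ->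
            RInt (fun x => u x * v x) 0 l = r * RInt (fun x => u x * u x) 0 l).
  { intros l u v Hl0 Hu Hv.
    rewrite (RInt_ext _ (fun x => r * (u x * u x))).
    - apply (RInt_scal (V := R_CompleteNormedModule)), (ex_RInt_edge_sqr l lam u Hl0 Hu).
    - intros x Hx. rewrite Rmin_left, Rmax_right in Hx by lra.
      rewrite Hv by lra. change (@eq R (u x * (r * u x)) (r * (u x * u x))). ring. }
  unfold ginner. rewrite (Hint 1 (ge g) (ge h)); [|lra|assumption|assumption].
  rewrite (sumR_ext s _ (fun j => r * RInt (fun x => se g j x * se g j x) 0 eps)).
  - rewrite sumR_scal. ring.
  - intros j Hj. destruct (Hsmall j Hj) as [Hj1 _].
    apply (Hint eps); [lra | exact Hj1 | intros; apply Hs; auto].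
Qed.

Lemma sumR_pos n f : (0 < n)%nat -> (forall i, (i < n)%nat -> 0 < f i) -> 0 < sumR n f.
Proof.
  induction n as [|[|n] IH]; intros Hn Hf; simpl sumR; [lia | |].
  - specialize (Hf 0%nat ltac:(lia)). simpl in *. lra.
  - assert (0 < sumR (S n) f) by (apply IH; [lia | intros; apply Hf; lia]).
    specialize (Hf (S n) ltac:(lia)). simpl in *. lra.
Qed.

Lemma ginner_low_pos s eps k g :
  (0 < s)%nat -> 0 < eps -> 0 < k -> k * eps < PI -> is_eigen s eps (k * k) g ->
  0 < ginner s eps g g.
Proof.
  intros Hs0 He Hk Hke Hg.
  pose proof (is_eigen_low_centre_neq0 s eps k g He Hk Hke Hg) as Hg0.
  destruct (is_eigen_low_form s eps k g He Hk Hke Hg) as [_ [_ [_ [_ Hsmall]]]].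
  destruct Hg as [Hlong [_ [Hedges _]]].
  assert (Hsin : 0 < sin (k * eps)) by (apply sin_gt_0; nra).
  unfold ginner. apply Rplus_le_lt_0_compat.
  - apply RInt_ge_0; [lra | apply (ex_RInt_edge_sqr 1 (k * k)); [lra | exact Hlong] |].
    intros x _. apply Rle_0_sqr.
  - apply sumR_pos; [exact Hs0|]. intros j Hj. destruct (Hedges j Hj) as [Hej _].
    apply RInt_gt_0; [exact He | |].
    + intros x Hx. rewrite Hsmall by (auto; lra).
      assert (0 < sin (k * (eps - x))) by (apply sin_gt_0; nra).
      assert (ge g 0 / sin (k * eps) <> 0) by (unfold Rdiv; apply Rmult_integral_contrapositive;
        split; [exact Hg0 | apply Rinv_neq_0_compat; lra]).
      apply Rsqr_pos_lt, Rmult_integral_contrapositive. split; lra.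
    + intros x Hx. apply (continuous_mult (K := R_AbsRing));
        apply (edge_eq_continuous eps (k * k)); assumption.
Qed.

Lemma is_eigen_low_not_orthogonal s eps k g h :
  (0 < s)%nat -> 0 < eps -> 0 < k -> k * eps < PI ->
  is_eigen s eps (k * k) g -> is_eigen s eps (k * k) h -> ginner s eps g h <> 0.
Proof.
  intros Hs0 He Hk Hke Hg Hh.
  destruct (is_eigen_low_proportional s eps k g h He Hk Hke Hg Hh) as [r [Hr [Hl Hs]]].
  rewrite (ginner_proportional s eps (k * k) g h r He Hg Hl Hs).
  apply Rmult_integral_contrapositive. split; [exact Hr|].
  apply Rgt_not_eq, (ginner_low_pos s eps k g); assumption.
Qed.

(** * The secular equation and the low eigenvalues *)

Definition secular (s : nat) (eps k : R) : R :=
  sin (k * eps) * cos k + INR s * sin k * cos (k * eps).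

Definition secular_eigenfunction (eps k : R) : gfun :=
  mkGfun (fun x => sin (k * eps) * sin (k * (1 - x))) (fun _ x => sin k * sin (k * (eps - x))).

Lemma secular_root_is_eigen s eps k :
  0 < eps -> 0 < k -> k * eps < PI -> sin k <> 0 -> secular s eps k = 0 ->
  is_eigen s eps (k * k) (secular_eigenfunction eps k).
Proof.
  intros He Hk Hke Hsk Hsec.
  assert (Hse : 0 < sin (k * eps)) by (apply sin_gt_0; nra).
  assert (Hsol : forall a l x,
            is_derive (fun x => a * sin (k * (l - x))) x (- a * k * cos (k * (l - x))) /\
            is_derive (fun x => - a * k * cos (k * (l - x))) x
                      (- (k * k) * (a * sin (k * (l - x))))).
  { intros a l x. split; auto_derive; auto; unfold Rminus; ring. }
  unfold is_eigen, secular_eigenfunction; simpl. split; [|split; [|split; [|split]]].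
  - exists (fun x => - sin (k * eps) * k * cos (k * (1 - x))). intros x _. apply Hsol.
  - rewrite Rminus_diag, Rmult_0_r, sin_0. ring.
  - intros j _. split; [|split].
    + exists (fun x => - sin k * k * cos (k * (eps - x))). intros x _. apply Hsol.
    + rewrite Rminus_diag, Rmult_0_r, sin_0. ring.
    + rewrite !Rminus_0_r, Rmult_1_r. ring.
  - assert (Dlong : Derive (fun x => sin (k * eps) * sin (k * (1 - x))) 0
                    = - sin (k * eps) * k * cos (k * (1 - 0))) by apply is_derive_unique, Hsol.
    assert (Dsmall : Derive (fun x => sin k * sin (k * (eps - x))) 0
                     = - sin k * k * cos (k * (eps - 0))) by apply is_derive_unique, Hsol.
    rewrite Dlong, Dsmall, sumR_const, !Rminus_0_r, Rmult_1_r.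
    replace (_ + _) with (- k * secular s eps k) by (unfold secular; ring).
    rewrite Hsec. ring.
  - left. exists 0. split; [lra|]. simpl. rewrite Rminus_0_r, Rmult_1_r.
    apply Rmult_integral_contrapositive. split; lra.
Qed.

Lemma sin_nat_mul_PI n : sin (INR n * PI) = 0.
Proof.
  induction n as [|n IH]; [rewrite Rmult_0_l; apply sin_0|].
  rewrite S_INR, Rmult_plus_distr_r, Rmult_1_l, neg_sin, IH. ring.
Qed.

Lemma cos_nat_mul_PI_sqr n : cos (INR n * PI) * cos (INR n * PI) = 1.
Proof.
  pose proof (sin2_cos2 (INR n * PI)) as H. rewrite sin_nat_mul_PI in H.
  unfold Rsqr in H. lra.
Qed.

(* The secular function changes sign on [n PI - PI/2, n PI]. *)
Lemma secular_root_exists s eps n :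
  (0 < s)%nat -> 0 < eps -> (1 <= n)%nat -> INR n * PI * eps < PI / 2 ->
  exists k, INR n * PI - PI / 2 < k < INR n * PI /\ secular s eps k = 0.
Proof.
  intros Hs He Hn Hb.
  set (b := INR n * PI) in *. set (a := b - PI / 2).
  pose proof PI_RGT_0 as HPI.
  assert (Hn1 : 1 <= INR n) by (apply (le_INR 1); exact Hn).
  assert (Hab : a < b) by (unfold a; lra).
  assert (Hca : cos a = 0).
  { unfold a. rewrite cos_minus, cos_PI2, sin_PI2. unfold b. rewrite sin_nat_mul_PI. ring. }
  assert (Hsa : sin a = - cos b) by (unfold a; rewrite sin_minus, cos_PI2, sin_PI2; ring).
  assert (Hsb : sin b = 0) by apply sin_nat_mul_PI.
  assert (Ha : PI / 2 <= a) by (unfold a, b; nra).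
  assert (Hae : 0 < a * eps) by (apply Rmult_lt_0_compat; lra).
  assert (Habe : a * eps < b * eps) by (apply Rmult_lt_compat_r; lra).
  assert (Hcae : 0 < cos (a * eps)) by (apply cos_gt_0; lra).
  assert (Hsbe : 0 < sin (b * eps)) by (apply sin_gt_0; lra).
  assert (HsR : 0 < INR s) by (apply lt_0_INR, Hs).
  assert (Hsign : secular s eps a * secular s eps b < 0).
  { unfold secular. rewrite Hca, Hsa, Hsb.
    replace (_ * _) with (- (INR s * cos (a * eps) * sin (b * eps)) * (cos b * cos b))
      by ring.
    replace (cos b * cos b) with 1 by (symmetry; apply cos_nat_mul_PI_sqr).
    assert (0 < INR s * cos (a * eps) * sin (b * eps)) by (apply Rmult_lt_0_compat; nra).
    lra. }
  assert (Hcont : continuity (secular s eps)).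
  { intros x. eapply is_derive_continuity_pt. unfold secular. auto_derive; auto. }
  destruct (IVT_cor (secular s eps) a b Hcont ltac:(lra) ltac:(lra)) as [k [Hk Hk0]].
  exists k. split; [|exact Hk0].
  assert (k <> a) by (intros ->; rewrite Hk0 in Hsign; lra).
  assert (k <> b) by (intros ->; rewrite Hk0 in Hsign; lra).
  unfold a in *. lra.
Qed.

Lemma low_eigenvalue_exists s eps n :
  (0 < s)%nat -> 0 < eps -> (1 <= n)%nat -> INR n * PI * eps < PI / 2 ->
  exists k, INR n * PI - PI / 2 < k < INR n * PI /\
            is_eigen s eps (k * k) (secular_eigenfunction eps k).
Proof.
  intros Hs He Hn Hb.
  pose proof PI_RGT_0 as HPI.
  assert (Hn1 : 1 <= INR n) by (apply (le_INR 1); exact Hn).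
  destruct (secular_root_exists s eps n Hs He Hn Hb) as [k [Hk Hsec]].
  exists k. split; [exact Hk|].
  apply secular_root_is_eigen; auto; [nra | nra |].
  replace k with (INR n * PI - (INR n * PI - k)) by ring.
  rewrite sin_minus, sin_nat_mul_PI.
  assert (0 < sin (INR n * PI - k)) by (apply sin_gt_0; lra).
  pose proof (cos_nat_mul_PI_sqr n). nra.
Qed.

Definition increasing_upto (z : nat -> R) (N : nat) : Prop :=
  forall i j, (i < j)%nat -> (j < N)%nat -> z i < z j.

Lemma spectral_seq_attains s eps lam f mu g :
  spectral_seq s eps lam f -> is_eigen s eps mu g -> exists i, lam i = mu.
Proof.
  intros [_ [_ [_ Hcomplete]]] Hg.
  destruct (Hcomplete mu g Hg) as [n [a [Ha [Hlong Hsmall]]]].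
  assert (Hex : exists x : nat -> R, sumR n (fun k => a k * x k) <> 0).
  { destruct Hg as [_ [_ [_ [_ [[x [Hx Hne]] | [j [x [Hj [Hx Hne]]]]]]]]].
    - exists (fun k => ge (f k) x). rewrite Hlong in Hne by exact Hx. exact Hne.
    - exists (fun k => se (f k) j x). rewrite Hsmall in Hne by auto. exact Hne. }
  destruct Hex as [x Hsum].
  destruct (sumR_neq0 n _ Hsum) as [i [Hi Hai]].
  exists i. apply Ha; [exact Hi|]. intros E. apply Hai. rewrite E. ring.
Qed.

Lemma growing_attains_late_index (lam mu : nat -> R) N :
  Un_growing lam -> increasing_upto mu N -> (forall n, (n < N)%nat -> exists i, lam i = mu n) ->
  forall n, (n < N)%nat -> exists i, (n <= i)%nat /\ lam i = mu n.
Proof.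
  intros Hgrow Hmu Hatt n. induction n as [|n IH]; intros Hn.
  - destruct (Hatt 0%nat Hn) as [i Hi]. exists i. split; [lia | exact Hi].
  - destruct IH as [i [Hni Hi]]; [lia|].
    destruct (Hatt (S n) Hn) as [j Hj].
    exists j. split; [|exact Hj].
    destruct (Compare_dec.le_lt_dec j i) as [Hji|]; [exfalso|lia].
    pose proof (growing_prop lam i j Hgrow Hji). pose proof (Hmu n (S n) ltac:(lia) Hn). lra.
Qed.

(* The secular roots in (n PI - PI/2, n PI), n = 1..M, are M distinct eigenvalues below
   (M PI)^2, so lam reaches the largest of them at an index >= M - 1. *)
Lemma spectral_seq_has_low_eigenvalue M s eps lam f :
  (0 < M)%nat -> (0 < s)%nat -> 0 < eps -> INR M * eps < 1 / 2 -> spectral_seq s eps lam f ->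
  exists i, (M - 1 <= i)%nat /\ lam i < (INR M * PI) * (INR M * PI).
Proof.
  intros HM Hs He HMe Hspec.
  pose proof PI_RGT_0 as HPI.
  destruct (finite_choice 0 (fun n k => INR (S n) * PI - PI / 2 < k < INR (S n) * PI /\
              is_eigen s eps (k * k) (secular_eigenfunction eps k)) M) as [kf Hkf].
  { intros n Hn. apply low_eigenvalue_exists; auto; [lia|].
    assert (INR (S n) <= INR M) by (apply le_INR; lia).
    assert (INR (S n) * eps <= INR M * eps) by (apply Rmult_le_compat_r; lra).
    nra. }
  assert (Hinc : increasing_upto (fun n => kf n * kf n) M).
  { intros i j Hij Hj. destruct (Hkf i ltac:(lia)) as [[Hi1 Hi2] _].
    destruct (Hkf j Hj) as [[Hj1 Hj2] _].
    assert (INR (S i) + 1 <= INR (S j)) by (rewrite <- S_INR; apply le_INR; lia).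
    assert (1 <= INR (S i)) by (apply (le_INR 1); lia).
    assert (0 < kf i) by nra. assert (kf i < kf j) by nra. nra. }
  destruct (growing_attains_late_index lam (fun n => kf n * kf n) M (proj1 (proj2 Hspec)) Hinc)
    with (n := (M - 1)%nat) as [i [Hi Hlam]]; [|lia|].
  - intros n Hn. destruct (Hkf n Hn) as [_ Heig].
    exact (spectral_seq_attains _ _ _ _ _ _ Hspec Heig).
  - exists i. split; [exact Hi|]. rewrite Hlam.
    destruct (Hkf (M - 1)%nat ltac:(lia)) as [[Hk1 Hk2] _].
    replace (S (M - 1)) with M in Hk1, Hk2 by lia.
    assert (1 <= INR M) by (apply (le_INR 1); lia).
    assert (0 < kf (M - 1)%nat) by nra. nra.
Qed.

Lemma spectral_seq_low_freq M s eps lam f :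
  (0 < M)%nat -> (0 < s)%nat -> 0 < eps -> INR M * eps < 1 / 2 -> spectral_seq s eps lam f ->
  forall i, (i < M)%nat -> 0 < lam i /\ sqrt (lam i) * eps < PI / 2.
Proof.
  intros HM Hs He HMe Hspec i Hi.
  destruct (spectral_seq_has_low_eigenvalue M s eps lam f HM Hs He HMe Hspec) as [i0 [Hi0 Hlam]].
  destruct Hspec as [Heig [Hgrow _]].
  pose proof PI_RGT_0 as HPI.
  assert (Hpos : 0 < lam i) by exact (is_eigen_pos s eps _ (f i) He (Heig i)).
  split; [exact Hpos|].
  assert (Hle : lam i <= lam i0) by (apply Rge_le, growing_prop; [exact Hgrow | lia]).
  assert (Hsqrt : sqrt (lam i) < INR M * PI).
  { rewrite <- (sqrt_square (INR M * PI)) by (apply Rmult_le_pos; [apply pos_INR | lra]).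
    apply sqrt_lt_1; lra. }
  assert (0 <= sqrt (lam i)) by apply sqrt_pos.
  nra.
Qed.

Lemma spectral_seq_low_increasing M s eps lam f :
  (0 < M)%nat -> (0 < s)%nat -> 0 < eps -> INR M * eps < 1 / 2 -> spectral_seq s eps lam f ->
  increasing_upto lam M.
Proof.
  intros HM Hs He HMe Hspec i j Hij Hj.
  pose proof (spectral_seq_low_freq M s eps lam f HM Hs He HMe Hspec i ltac:(lia)) as [Hpos Hk].
  destruct Hspec as [Heig [Hgrow [Horth _]]].
  assert (Hle : lam i <= lam j) by (apply Rge_le, growing_prop; [exact Hgrow | lia]).
  destruct (Rle_lt_or_eq_dec _ _ Hle) as [|Heq]; [assumption | exfalso].
  set (k := sqrt (lam i)) in *.
  assert (Hkk : k * k = lam i) by (apply sqrt_sqrt; lra).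
  assert (0 < k) by (apply sqrt_lt_R0, Hpos).
  pose proof PI_RGT_0.
  apply (is_eigen_low_not_orthogonal s eps k (f i) (f j)); auto; [lra | | |].
  - rewrite Hkk. apply Heig.
  - rewrite Hkk, Heq. apply Heig.
  - apply Horth. lia.
Qed.

(** * Zeros of sine sums *)

Definition nontrivial (c : nat -> R) (n : nat) : Prop := exists i, (i < n)%nat /\ c i <> 0.

Definition sine_sum (c k : nat -> R) (n : nat) (y : R) : R :=
  sumR n (fun i => c i * sin (k i * y)).

Definition sine_sum' (c k : nat -> R) (n : nat) (y : R) : R :=
  sumR n (fun i => c i * k i * cos (k i * y)).

Definition sine_freqs (k : nat -> R) (n : nat) (eps : R) : Prop :=
  (forall i, (i < n)%nat -> 0 < k i /\ k i * eps < PI) /\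
  (forall i j, (i < n)%nat -> (j < n)%nat -> i <> j -> k i <> k j).

Lemma sine_freqs_le k n n' eps : (n <= n')%nat -> sine_freqs k n' eps -> sine_freqs k n eps.
Proof. intros Hn [Hpos Hdist]. split; intros; [apply Hpos | apply Hdist]; auto; lia. Qed.

Lemma is_derive_sine_sum c k n y : is_derive (sine_sum c k n) y (sine_sum' c k n y).
Proof.
  apply (is_derive_sumR n (fun i y => c i * sin (k i * y))).
  intros i _. auto_derive; auto. ring.
Qed.

Lemma is_derive_sine_sum' c k n y :
  is_derive (sine_sum' c k n) y (sine_sum (fun i => - (c i * k i * k i)) k n y).
Proof.
  apply (is_derive_sumR n (fun i y => c i * k i * cos (k i * y))).
  intros i _. auto_derive; auto. ring.
Qed.

Lemma sine_sum_0 c k n : sine_sum c k n 0 = 0.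
Proof. apply sumR_eq0. intros i _. rewrite Rmult_0_r, sin_0. ring. Qed.

Lemma increasing_upto_le z N i j :
  increasing_upto z N -> (i <= j)%nat -> (j < N)%nat -> z i <= z j.
Proof.
  intros Hz Hij Hj. destruct (Nat.eq_dec i j) as [->|]; [lra|]. apply Rlt_le, Hz; lia.
Qed.

Lemma increasing_upto_succ z N :
  (forall i, (S i < N)%nat -> z i < z (S i)) -> increasing_upto z N.
Proof.
  intros Hz i j Hij Hj. induction Hij as [|j Hij IH]; [apply Hz, Hj|].
  specialize (IH ltac:(lia)). specialize (Hz j Hj). lra.
Qed.

Lemma rolle_interlacing (f df : R -> R) (z : nat -> R) N :
  increasing_upto z (S N) -> (forall x, z 0%nat <= x <= z N -> is_derive f x (df x)) ->
  (forall i, (i <= N)%nat -> f (z i) = 0) ->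
  exists w, forall i, (i < N)%nat -> z i < w i < z (S i) /\ df (w i) = 0.
Proof.
  intros Hz Hd Hf. apply (finite_choice 0 (fun i w => z i < w < z (S i) /\ df w = 0)).
  intros i Hi.
  apply (rolle_is_derive f df).
  - apply Hz; lia.
  - intros x Hx. apply Hd.
    pose proof (increasing_upto_le z (S N) 0 i Hz ltac:(lia) ltac:(lia)).
    pose proof (increasing_upto_le z (S N) (S i) N Hz ltac:(lia) ltac:(lia)). lra.
  - rewrite !Hf by lia. reflexivity.
Qed.

(* With phi y = sin (k_m y) and H the sine sum, this is phi H' - phi' H = phi^2 (H / phi)'. *)
Definition sine_wronskian (c k : nat -> R) (m : nat) (y : R) : R :=
  sin (k m * y) * sine_sum' c k (S m) y - k m * cos (k m * y) * sine_sum c k (S m) y.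

Lemma is_derive_sine_wronskian c k m y :
  is_derive (sine_wronskian c k m) y
    (sin (k m * y) * sine_sum (fun i => c i * (k m * k m - k i * k i)) k m y).
Proof.
  set (a := k m).
  eapply is_derive_eq.
  - apply is_derive_Rminus; apply is_derive_Rmult;
      [| apply is_derive_sine_sum' | | apply is_derive_sine_sum];
      auto_derive; auto; reflexivity.
  - assert (Hred : sine_sum (fun i => c i * (a * a - k i * k i)) k m y
                   = a * a * sine_sum c k (S m) y
                     + sine_sum (fun i => - (c i * k i * k i)) k (S m) y).
    { unfold sine_sum. simpl sumR. fold a. rewrite Rmult_plus_distr_l, <- sumR_scal.
      transitivity (sumR m (fun i => a * a * (c i * sin (k i * y)))
                    + sumR m (fun i => - (c i * k i * k i) * sin (k i * y))); [|ring].
      rewrite <- sumR_plus. apply sumR_ext. intros i _. ring. }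
    rewrite Hred. unfold a. ring.
Qed.

(* Rolle for H / sin (k_m y), whose derivative is the Wronskian over sin^2; the Wronskian
   also vanishes at 0 because H does. *)
Lemma sine_wronskian_zeros c k m z N eps :
  0 < k m -> k m * eps < PI -> increasing_upto z (S N) ->
  (forall i, (i <= N)%nat -> 0 < z i <= eps /\ sine_sum c k (S m) (z i) = 0) ->
  exists w, increasing_upto w (S N) /\
    (forall i, (i <= N)%nat -> 0 <= w i < z i /\ sine_wronskian c k m (w i) = 0).
Proof.
  intros Hk Hke Hz Hzeros.
  assert (Hphi : forall y, 0 < y <= eps -> 0 < sin (k m * y)) by (intros; apply sin_gt_0; nra).
  destruct (rolle_interlacing (fun y => sine_sum c k (S m) y / sin (k m * y))
              (fun y => sine_wronskian c k m y / sin (k m * y) ^ 2) z N Hz) as [w Hw].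
  - intros x Hx.
    destruct (Hzeros 0%nat ltac:(lia)), (Hzeros N ltac:(lia)).
    assert (0 < sin (k m * x)) by (apply Hphi; lra).
    eapply is_derive_eq.
    + apply (is_derive_div _ _ x (sine_sum' c k (S m) x) (k m * cos (k m * x)));
        [apply is_derive_sine_sum | | lra].
      auto_derive; auto. ring.
    + unfold sine_wronskian. field. lra.
  - intros i Hi. destruct (Hzeros i Hi) as [_ ->]. unfold Rdiv. ring.
  - exists (fun i => match i with O => 0 | S i => w i end).
    assert (Hwz : forall i, (i < N)%nat -> z i < w i < z (S i) /\ 0 < z i)
      by (intros i Hi; destruct (Hw i Hi) as [? _], (Hzeros i ltac:(lia)); split; lra).
    split.
    + apply increasing_upto_succ. intros [|i] Hi; simpl.
      * destruct (Hwz 0%nat ltac:(lia)). lra.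
      * destruct (Hwz i ltac:(lia)), (Hwz (S i) ltac:(lia)). lra.
    + intros [|i] Hi; simpl.
      * destruct (Hzeros 0%nat ltac:(lia)). split; [lra|].
        unfold sine_wronskian. rewrite Rmult_0_r, sin_0, sine_sum_0. ring.
      * destruct (Hwz i ltac:(lia)) as [Hwi Hzi], (Hzeros (S i) Hi) as [HzS _].
        split; [lra|].
        assert (0 < sin (k m * w i)) by (apply Hphi; lra).
        destruct (Hw i ltac:(lia)) as [_ H0].
        apply (Rmult_eq_reg_r (/ sin (k m * w i) ^ 2)); [rewrite Rmult_0_l; exact H0|].
        apply Rinv_neq_0_compat, pow_nonzero. lra.
Qed.

Lemma sine_sum_zeros_reduce c k m z N eps :
  0 < k m -> k m * eps < PI -> increasing_upto z (S N) ->
  (forall i, (i <= N)%nat -> 0 < z i <= eps /\ sine_sum c k (S m) (z i) = 0) ->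
  exists v, increasing_upto v N /\
    (forall i, (i < N)%nat -> 0 < v i <= eps /\
       sine_sum (fun i => c i * (k m * k m - k i * k i)) k m (v i) = 0).
Proof.
  intros Hk Hke Hz Hzeros.
  destruct (sine_wronskian_zeros c k m z N eps Hk Hke Hz Hzeros) as [w [Hw Hwz]].
  destruct (rolle_interlacing (sine_wronskian c k m)
              (fun y => sin (k m * y) * sine_sum (fun i => c i * (k m * k m - k i * k i)) k m y)
              w N Hw) as [v Hv].
  - intros x _. apply is_derive_sine_wronskian.
  - intros i Hi. apply Hwz, Hi.
  - exists v. split.
    + apply increasing_upto_succ. intros i Hi.
      destruct (Hv i ltac:(lia)) as [? _], (Hv (S i) Hi) as [? _]. lra.
    + intros i Hi. destruct (Hv i Hi) as [[Hv1 Hv2] Hv0].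
      destruct (Hwz i ltac:(lia)) as [[Hw0 _] _], (Hwz (S i) Hi) as [[_ HwS] _].
      destruct (Hzeros (S i) Hi) as [[_ HzS] _].
      assert (0 < sin (k m * v i)) by (apply sin_gt_0; nra).
      split; [lra|]. apply Rmult_integral in Hv0. destruct Hv0; [lra | assumption].
Qed.

Lemma sine_sum_zeros_lt n c k z N eps :
  sine_freqs k n eps -> nontrivial c n -> increasing_upto z N ->
  (forall i, (i < N)%nat -> 0 < z i <= eps /\ sine_sum c k n (z i) = 0) ->
  (N < n)%nat.
Proof.
  revert c z N. induction n as [|m IH]; intros c z N Hk [i0 [Hi0 Hci0]] Hz Hzeros; [lia|].
  destruct N as [|N]; [lia|].
  destruct (proj1 Hk m ltac:(lia)) as [Hkm Hkme].
  destruct (classic (nontrivial c m)) as [[i [Hi Hci]] | Htriv].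
  - destruct (sine_sum_zeros_reduce c k m z N eps Hkm Hkme Hz) as [v [Hv Hvz]];
      [intros; apply Hzeros; lia|].
    enough (N < m)%nat by lia.
    apply (IH (fun i => c i * (k m * k m - k i * k i)) v N
             (sine_freqs_le k m (S m) eps ltac:(lia) Hk));
      [|exact Hv | exact Hvz].
    exists i. split; [exact Hi|]. apply Rmult_integral_contrapositive. split; [exact Hci|].
    assert (k i <> k m) by (apply (proj2 Hk); lia).
    destruct (proj1 Hk i ltac:(lia)). intros E.
    assert ((k m - k i) * (k m + k i) = 0) by (rewrite <- E; ring). nra.
  - exfalso.
    assert (Hcm : c m <> 0).
    { destruct (Nat.eq_dec i0 m) as [<- | Hne]; [exact Hci0|].
      exfalso. apply Htriv. exists i0. split; [lia | exact Hci0]. }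
    destruct (Hzeros 0%nat ltac:(lia)) as [Hz0 Hsum].
    unfold sine_sum in Hsum. simpl sumR in Hsum.
    rewrite sumR_eq0, Rplus_0_l in Hsum.
    + assert (0 < sin (k m * z 0%nat)) by (apply sin_gt_0; nra).
      apply Rmult_integral in Hsum. destruct Hsum; lra.
    + intros i Hi. destruct (Req_dec (c i) 0) as [-> | Hci]; [ring|].
      exfalso. apply Htriv. exists i. split; [exact Hi | exact Hci].
Qed.

Lemma homogeneous_system_nontrivial m (A : nat -> nat -> R) :
  exists c, nontrivial c (S m) /\
    forall j, (j < m)%nat -> sumR (S m) (fun i => c i * A j i) = 0.
Proof.
  revert A. induction m as [|m IH]; intros A.
  - exists (fun _ => 1). split; [exists 0%nat; split; [lia | lra] | intros; lia].
  - destruct (classic (exists j0, (j0 <= m)%nat /\ A j0 (S m) <> 0))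
      as [[j0 [Hj0 Hpiv]] | Hnopiv].
    + (* eliminate the last unknown with the pivot row j0, and move row m into its place *)
      set (row := fun j => if Nat.eq_dec j j0 then m else j).
      set (r := fun j => A (row j) (S m) / A j0 (S m)).
      destruct (IH (fun j i => A (row j) i - r j * A j0 i)) as [d [Hd Hdz]].
      set (D := fun j' => sumR (S m) (fun i => d i * A j' i)).
      exists (fun i => if Nat.eq_dec i (S m) then - D j0 / A j0 (S m) else d i). split.
      * destruct Hd as [i [Hi Hdi]]. exists i. split; [lia|].
        destruct (Nat.eq_dec i (S m)); [lia | exact Hdi].
      * intros j Hj. rewrite sumR_S.
        destruct (Nat.eq_dec (S m) (S m)) as [_|]; [|lia].
        rewrite (sumR_ext (S m) _ (fun i => d i * A j i)).
        2:{ intros i Hi. destruct (Nat.eq_dec i (S m)); [lia | reflexivity]. }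
        fold (D j).
        destruct (Nat.eq_dec j j0) as [-> | Hne]; [field; exact Hpiv|].
        set (j' := if Nat.eq_dec j m then j0 else j).
        assert (Hj' : (j' < m)%nat) by (unfold j'; destruct (Nat.eq_dec j m); lia).
        assert (Hrow : row j' = j).
        { unfold row, j'. destruct (Nat.eq_dec j m) as [-> | ];
            destruct (Nat.eq_dec _ j0); congruence. }
        specialize (Hdz j' Hj').
        rewrite (sumR_ext (S m) _ (fun i => d i * A j i + - r j' * (d i * A j0 i))),
          sumR_plus, sumR_scal in Hdz by (intros; rewrite Hrow; ring).
        unfold r in Hdz. rewrite Hrow in Hdz. fold (D j) (D j0) in Hdz.
        rewrite <- Hdz. field. exact Hpiv.
  + exists (fun i => if Nat.eq_dec i (S m) then 1 else 0). split.
    * exists (S m). split; [lia|]. destruct (Nat.eq_dec (S m) (S m)); [lra | lia].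
    * intros j Hj. rewrite sumR_S, sumR_eq0.
      -- destruct (Nat.eq_dec (S m) (S m)) as [_|]; [|lia].
         destruct (Req_dec (A j (S m)) 0) as [-> | Hne]; [ring|].
         exfalso. apply Hnopiv. exists j. split; [lia | exact Hne].
      -- intros i Hi. destruct (Nat.eq_dec i (S m)); [lia | ring].
Qed.

Lemma increasing_insert_position (y : nat -> R) n z :
  increasing_upto y n -> (forall i, (i < n)%nat -> y i <> z) ->
  exists p, (p <= n)%nat /\ (forall i, (i < p)%nat -> y i < z) /\
            (forall i, (p <= i)%nat -> (i < n)%nat -> z < y i).
Proof.
  induction n as [|n IH]; intros Hy Hz.
  - exists 0%nat. split; [lia|]. split; intros; lia.
  - destruct (Rlt_dec (y n) z) as [Hlt | Hge].
    + exists (S n). split; [lia|]. split; [|intros; lia].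
      intros i Hi. destruct (Nat.eq_dec i n) as [-> | ]; [exact Hlt|].
      assert (y i < y n) by (apply Hy; lia). lra.
    + assert (z < y n) by (assert (y n <> z) by (apply Hz; lia); lra).
      destruct IH as [p [Hp1 [Hp2 Hp3]]];
        [intros i j ? ?; apply Hy; lia | intros; apply Hz; lia |].
      exists p. split; [lia|]. split; [exact Hp2|].
      intros i Hpi Hi. destruct (Nat.eq_dec i n) as [-> | ]; [assumption | apply Hp3; lia].
Qed.

Lemma increasing_insert (y : nat -> R) n z :
  increasing_upto y n -> (forall i, (i < n)%nat -> y i <> z) ->
  exists w, increasing_upto w (S n) /\
    (forall i, (i < S n)%nat -> w i = z \/ exists i', (i' < n)%nat /\ w i = y i').
Proof.
  intros Hy Hz. destruct (increasing_insert_position y n z Hy Hz) as [p [Hp [Hbelow Habove]]].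
  exists (fun i => if Nat.ltb i p then y i else if Nat.eqb i p then z else y (pred i)).
  split.
  - intros i j Hij Hj.
    destruct (Nat.ltb_spec i p), (Nat.ltb_spec j p), (Nat.eqb_spec i p), (Nat.eqb_spec j p);
      try lia.
    + apply Hy; lia.
    + apply Hbelow; lia.
    + assert (y i < z) by (apply Hbelow; lia). assert (z < y (pred j)) by (apply Habove; lia).
      lra.
    + apply Habove; lia.
    + apply Hy; lia.
  - intros i Hi.
    destruct (Nat.ltb_spec i p); [right; exists i; split; [lia | reflexivity]|].
    destruct (Nat.eqb_spec i p); [left; reflexivity|].
    right; exists (pred i). split; [lia | reflexivity].
Qed.

(* By sine_sum_zeros_lt, any further zero in (0, eps] would make n + 1 zeros. *)
Lemma sine_sum_zero_set n c k y eps :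
  0 < eps -> sine_freqs k (S n) eps -> nontrivial c (S n) -> increasing_upto y n ->
  (forall i, (i < n)%nat -> 0 < y i < eps /\ sine_sum c k (S n) (y i) = 0) ->
  sine_sum c k (S n) eps <> 0 /\
  (forall z, 0 < z < eps -> sine_sum c k (S n) z = 0 -> exists i, (i < n)%nat /\ z = y i).
Proof.
  intros He Hk Hc Hy Hyz. split.
  - intros Heps. enough (S n < S n)%nat by lia.
    apply (sine_sum_zeros_lt (S n) c k (fun i => if Nat.ltb i n then y i else eps) (S n) eps
             Hk Hc).
    + intros i j Hij Hj. destruct (Nat.ltb_spec i n), (Nat.ltb_spec j n); try lia.
      * apply Hy; lia.
      * apply Hyz; lia.
    + intros i Hi. destruct (Nat.ltb_spec i n).
      * destruct (Hyz i ltac:(lia)). split; [lra | assumption].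
      * split; [lra | exact Heps].
  - intros z Hz Hzero.
    destruct (classic (exists i, (i < n)%nat /\ z = y i)) as [|Hnew]; [assumption | exfalso].
    destruct (increasing_insert y n z Hy) as [w [Hw Hwyz]].
    { intros i Hi E. apply Hnew. exists i. split; [exact Hi | congruence]. }
    enough (S n < S n)%nat by lia.
    apply (sine_sum_zeros_lt (S n) c k w (S n) eps Hk Hc Hw).
    intros i Hi. destruct (Hwyz i Hi) as [-> | [i' [Hi' ->]]].
    + split; [lra | exact Hzero].
    + destruct (Hyz i' Hi'). split; [lra | assumption].
Qed.

(** * Zeros on the small edges *)

Lemma exists_increasing_points n a b :
  a < b -> exists y, increasing_upto y n /\ forall i, (i < n)%nat -> a < y i < b.
Proof.
  intros Hab.
  assert (Hn : 0 < INR (S n)) by (apply lt_0_INR; lia).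
  exists (fun i => a + (b - a) * (INR (S i) / INR (S n))). split.
  - intros i j Hij _. assert (INR (S i) < INR (S j)) by (apply lt_INR; lia).
    apply Rplus_lt_compat_l, Rmult_lt_compat_l; [lra|].
    apply Rmult_lt_compat_r; [apply Rinv_0_lt_compat, Hn | assumption].
  - intros i Hi.
    assert (0 < INR (S i)) by (apply lt_0_INR; lia).
    assert (INR (S i) < INR (S n)) by (apply lt_INR; lia).
    assert (0 < INR (S i) / INR (S n) < 1).
    { split; [apply Rdiv_lt_0_compat; assumption|].
      apply (Rmult_lt_reg_r (INR (S n))); [exact Hn|].
      unfold Rdiv. rewrite Rmult_assoc, Rinv_l, Rmult_1_r, Rmult_1_l by lra. assumption. }
    nra.
Qed.

Lemma NoDup_list_prod {A B : Type} (l : list A) (l' : list B) :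
  NoDup l -> NoDup l' -> NoDup (list_prod l l').
Proof.
  induction l as [|a l IH]; intros Hl Hl'; simpl; [constructor|].
  inversion Hl as [|? ? Ha Hl0]; subst. apply NoDup_app.
  - apply Injective_map_NoDup; [intros x y E; inversion E; reflexivity | exact Hl'].
  - apply IH; assumption.
  - intros [x y] Hin1 Hin2. apply in_map_iff in Hin1. destruct Hin1 as [z [E _]].
    inversion E; subst. apply in_prod_iff in Hin2. tauto.
Qed.

Lemma small_zero_count_profile s eps g (h : R -> R) (y : nat -> R) n :
  increasing_upto y n -> (forall i, (i < n)%nat -> 0 < y i < eps) ->
  (forall z, 0 < z < eps -> h z = 0 <-> exists i, (i < n)%nat /\ z = y i) ->
  (forall j x, (j < s)%nat -> 0 <= x <= eps -> se g j x = h (eps - x)) ->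
  ge g 0 <> 0 ->
  small_zero_count s eps g (s * n).
Proof.
  intros Hy Hyb Hzeros Hprofile Hcentre.
  exists (list_prod (seq 0 s) (map (fun i => eps - y i) (seq 0 n))). split; [|split].
  - apply NoDup_list_prod; [apply seq_NoDup|].
    apply Injective_map_NoDup_in; [|apply seq_NoDup].
    intros i j Hi Hj E. apply in_seq in Hi, Hj.
    destruct (Compare_dec.lt_eq_lt_dec i j) as [[Hij | ] | Hji]; [| assumption |];
      [pose proof (Hy i j Hij ltac:(lia)) | pose proof (Hy j i Hji ltac:(lia))]; lra.
  - intros [j x]. simpl. rewrite in_prod_iff, in_seq, in_map_iff. split.
    + intros [[_ Hj] [i [<- Hi]]]. apply in_seq in Hi. destruct (Hyb i ltac:(lia)).
      split; [lia|]. split; [lra|].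
      rewrite Hprofile by (lia || lra). replace (eps - (eps - y i)) with (y i) by ring.
      apply Hzeros; [lra|]. exists i. split; [lia | reflexivity].
    + intros [Hj [Hx Hzero]]. rewrite Hprofile in Hzero by (lia || lra).
      destruct (proj1 (Hzeros (eps - x) ltac:(lra)) Hzero) as [i [Hi Ei]].
      split; [lia|]. exists i. split; [lra | apply in_seq; lia].
  - left. split; [exact Hcentre|].
    rewrite length_prod, length_map, !length_seq. reflexivity.
Qed.

Lemma lincomb_sine_profile s eps n (k : nat -> R) (f : nat -> gfun) (c : nat -> R) :
  0 < eps -> sine_freqs k n eps -> (forall i, (i < n)%nat -> is_eigen s eps (k i * k i) (f i)) ->
  exists a, ge (lincomb a n f) 0 = sine_sum c k n eps /\
    forall j x, (j < s)%nat -> 0 <= x <= eps -> se (lincomb a n f) j x = sine_sum c k n (eps - x).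
Proof.
  intros He [Hk _] Hf.
  exists (fun i => c i * sin (k i * eps) / ge (f i) 0).
  assert (Hform : forall i, (i < n)%nat -> ge (f i) 0 <> 0 /\ 0 < sin (k i * eps) /\
            forall j x, (j < s)%nat -> 0 <= x <= eps ->
              se (f i) j x = ge (f i) 0 / sin (k i * eps) * sin (k i * (eps - x))).
  { intros i Hi. destruct (Hk i Hi) as [Hki Hkie].
    split; [apply (is_eigen_low_centre_neq0 s eps (k i)); auto|].
    split; [apply sin_gt_0; nra|].
    destruct (is_eigen_low_form s eps (k i) (f i) He Hki Hkie (Hf i Hi)) as [_ [_ [_ [_ H]]]].
    exact H. }
  split.
  - apply sumR_ext. intros i Hi. destruct (Hform i Hi) as [H0 _]. field. exact H0.
  - intros j x Hj Hx. apply sumR_ext. intros i Hi. destruct (Hform i Hi) as [H0 [Hs Hse]].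
    rewrite Hse by assumption. field. split; lra.
Qed.

Lemma spectral_seq_sine_freqs M s eps lam f :
  (0 < M)%nat -> (0 < s)%nat -> 0 < eps -> INR M * eps < 1 / 2 -> spectral_seq s eps lam f ->
  sine_freqs (fun i => sqrt (lam i)) M eps.
Proof.
  intros HM Hs He HMe Hspec.
  pose proof (spectral_seq_low_freq M s eps lam f HM Hs He HMe Hspec) as Hlow.
  pose proof (spectral_seq_low_increasing M s eps lam f HM Hs He HMe Hspec) as Hinc.
  pose proof PI_RGT_0. split.
  - intros i Hi. destruct (Hlow i Hi). split; [apply sqrt_lt_R0; assumption | lra].
  - intros i j Hi Hj Hij E.
    destruct (Compare_dec.lt_eq_lt_dec i j) as [[Hlt | ] | Hlt]; [| lia |].
    + pose proof (Hinc i j Hlt Hj). apply sqrt_inj in E; [lra | |]; apply Rlt_le, Hlow; lia.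
    + pose proof (Hinc j i Hlt Hi). apply sqrt_inj in E; [lra | |]; apply Rlt_le, Hlow; lia.
Qed.

Theorem proposition16 :
  forall M s : nat, (0 < M)%nat -> (0 < s)%nat ->
  exists eps1 : R, 0 < eps1 /\
    forall eps : R, 0 < eps < eps1 ->
    forall (lam : nat -> R) (f : nat -> gfun), spectral_seq s eps lam f ->
    forall L : nat, (1 <= L <= M)%nat ->
    exists a : nat -> R,
      small_zero_count s eps (lincomb a L f)
        ((L - 1) + (L - 1) * (s - 1))%nat.
Proof.
  intros M s HM Hs.
  assert (HMR : 1 <= INR M) by (apply (le_INR 1); lia).
  exists (/ (2 * INR M + 2)). split; [apply Rinv_0_lt_compat; lra|].
  intros eps [He Heps] lam f Hspec L HL.
  (* M eps < 1/2 keeps the first M frequencies below PI / (2 eps). *)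
  assert (HMe : INR M * eps < 1 / 2).
  { apply (Rmult_lt_compat_r (2 * INR M + 2)) in Heps; [|lra].
    rewrite Rinv_l in Heps by lra. lra. }
  set (k := fun i => sqrt (lam i)).
  assert (Hk : sine_freqs k L eps).
  { apply (sine_freqs_le k L M eps (proj2 HL)).
    exact (spectral_seq_sine_freqs M s eps lam f HM Hs He HMe Hspec). }
  assert (Hf : forall i, (i < L)%nat -> is_eigen s eps (k i * k i) (f i)).
  { intros i Hi. unfold k. rewrite sqrt_sqrt; [apply Hspec|].
    apply Rlt_le, (is_eigen_pos s eps _ (f i) He), Hspec. }
  destruct L as [|n]; [lia|]. replace (S n - 1)%nat with n by lia.
  destruct (exists_increasing_points n 0 eps He) as [y [Hy Hyb]].
  destruct (homogeneous_system_nontrivial n (fun j i => sin (k i * y j))) as [c [Hc Hcy]].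
  destruct (sine_sum_zero_set n c k y eps He Hk Hc Hy) as [Hend Hzeros].
  { intros i Hi. split; [apply Hyb, Hi | apply Hcy, Hi]. }
  destruct (lincomb_sine_profile s eps (S n) k f c He Hk Hf) as [a [Hcentre Hprofile]].
  exists a. replace (n + n * (s - 1))%nat with (s * n)%nat by (destruct s; [lia | nia]).
  apply (small_zero_count_profile s eps _ (sine_sum c k (S n)) y n Hy Hyb); auto.
  - intros z Hz. split; [apply Hzeros, Hz|].
    intros [i [Hi ->]]. apply Hcy, Hi.
  - rewrite Hcentre. exact Hend.
Qed.
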